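(* Let $q$ be a prime power, let $m, c, h, M$ be positive integers and $\gamma \geq 0$ a real number with $c < \frac{(m-1) - m\gamma}{m} M$. Let $r_1, \ldots, r_m : \mathbb{F}_q \to \mathbb{F}_q$ be functions with $$\left|\{\alpha \in \mathbb{F}_q : r_i(\alpha) \neq r_j(\alpha) \text{ for some } i, j\}\right| \leq \gamma q.$$ Suppose $F_1(X), \ldots, F_m(X) \in \mathbb{F}_q[X]$ satisfy $\deg(F_i) < cq$ and each $F_i$ is an $r_i$-twisted $(h,M)$-pseudopolynomial. Let $k$ be an integer with $$k > \frac{M}{(m - 1 - m\gamma)M - mc}\cdot (h+1).$$ Then there exist $k$-pseudopolynomials $A_1(X), \ldots, A_m(X) \in \mathbb{F}_q[X]$ with $\deg(A_i) < Mq$, not all zero, such that $$\sum_{i=1}^m A_i(X) F_i(X) = 0.$$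
   Context: For $A(X) \in \mathbb{F}_q[X]$, $A^{[\ell]}(X)$ is the $\ell$-th Hasse derivative (the coefficient of $Z^\ell$ in $A(X+Z)$ expanded in powers of $Z$). With $\Lambda(X) = X^q - X$, the $\ell$-th pseudoderivative is $A_{\langle \ell \rangle}(X) = A^{[\ell]}(X) \bmod \Lambda(X)$. The pseudodegree is $\mathsf{pdeg}(A) = \max_{\ell \geq 0}\deg(A_{\langle\ell\rangle})$, and $A$ is a $k$-pseudopolynomial if $\mathsf{pdeg}(A) \leq k$. Given $r : \mathbb{F}_q \to \mathbb{F}_q$, a polynomial $F(X)$ is an $r$-twisted $(h,M)$-pseudopolynomial if for every $\ell$ with $0 \leq \ell < M$ there is $U_\ell(X) \in \mathbb{F}_q[X]$ of degree at most $h$ with $F^{[\ell]}(\alpha) = r(\alpha)\cdot U_\ell(\alpha)$ for all $\alpha \in \mathbb{F}_q$. *)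

From HB Require Import structures.
From mathcomp Require Import all_boot all_order all_algebra all_field.
From mathcomp Require Import reals.
Set Implicit Arguments. Unset Strict Implicit. Unset Printing Implicit Defensive.
Import Order.TTheory GRing.Theory Num.Theory.
Local Open Scope ring_scope.

Section PseudoPoly.
Variable F : finFieldType.

(* The l-th Hasse derivative: coefficient of Z^l in A(X+Z).  MathComp's
   nderivn n p = \poly_(i) (p`_(n+i) *+ 'C(n+i, n)) is exactly this. *)
Definition hasse (l : nat) (A : {poly F}) : {poly F} := nderivn l A.

Definition Lam : {poly F} := 'X^#|F| - 'X.

Definition pseudoderiv (l : nat) (A : {poly F}) : {poly F} := hasse l A %% Lam.

(* A is a k-pseudopolynomial: pdeg A = max_l deg(A_<l>) <= k, with deg 0 = -oo,
   i.e. every pseudoderivative has degree <= k (size <= k+1). *)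
Definition is_pseudopoly (k : int) (A : {poly F}) : Prop :=
  forall l : nat, ((size (pseudoderiv l A))%:Z <= k + 1)%R.

Definition is_twisted_pseudopoly (r : F -> F) (h M : nat) (P : {poly F}) : Prop :=
  forall l : nat, (l < M)%N ->
    exists U : {poly F}, (size U <= h.+1)%N /\
      forall a : F, (hasse l P).[a] = r a * U.[a].
End PseudoPoly.

From HB Require Import structures.
From mathcomp Require Import all_boot all_order all_algebra all_field.
From mathcomp Require Import reals.
From mathcomp Require Import zify ring lra.
Set Implicit Arguments. Unset Strict Implicit. Unset Printing Implicit Defensive.
Import Order.TTheory GRing.Theory Num.Theory.
Local Open Scope ring_scope.

(* Look for each A_i in Lambda-adic form A_i = sum_(j < M) B_ij Lambda^j with
   deg B_ij <= k, where Lambda = X^q - X.  Since Lambda(X + a) = Lambda(X), the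
   Hasse derivatives of A_i at points of F_q are combinations of those of the
   B_ij, so such an A_i is automatically a k-pseudopolynomial.  Write
   F_i^[l] = r_i U_il on F_q with deg U_il <= h.  At a point x where all twists
   agree, r_i(x) = rho, the Leibniz rule gives
     (sum_i A_i F_i)^[t](x) = rho * P_t(x),
     P_t = sum_i sum_(s <= t) (A_i)_<s> U_i(t - s),
   and P_t has fewer than k + 1 + h coefficients.  Forcing P_t = 0 for t < M is
   M (k + 1 + h) linear conditions, and the rate hypothesis makes the
   coefficients of the B_ij, restricted so that deg A_i < L = M |S| + 1 - c q,
   outnumber them, so a nonzero solution exists.  Then sum_i A_i F_i vanishes
   to order M on the agreement set S while its degree is below M |S|, hence it
   is 0.  When k >= q every polynomial is a k-pseudopolynomial and the Koszul
   syzygy F_2 e_1 - F_1 e_2 suffices. *)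

Lemma comp_poly1 (R : comNzRingType) (r : {poly R}) : 1 \Po r = 1.
Proof. by rewrite -polyC1 comp_polyC. Qed.

Lemma comp_poly_exp (R : comNzRingType) (p r : {poly R}) n : p ^+ n \Po r = (p \Po r) ^+ n.
Proof. by elim: n => [|n IHn]; rewrite ?comp_poly1 // !exprS comp_polyM IHn. Qed.

Lemma prod_XsubC_exp_dvdp (F : fieldType) M (G : {poly F}) (s : seq F) :
  uniq s -> (forall x, x \in s -> ('X - x%:P) ^+ M %| G) ->
  \prod_(x <- s) ('X - x%:P) ^+ M %| G.
Proof.
elim: s => [|x s IHs] /=; first by rewrite big_nil dvd1p.
move=> /andP[xNs s_uniq] dvdG; rewrite big_cons Gauss_dvdp.
  by rewrite dvdG ?mem_head // IHs // => y ys; rewrite dvdG // inE ys orbT.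
rewrite coprimep_expl // coprimep_sym coprimep_XsubC /root horner_prod.
rewrite prodf_seq_neq0; apply/allP => y ys /=.
by rewrite horner_exp hornerXsubC expf_neq0 // subr_eq0; apply: contraNneq xNs => ->.
Qed.

Lemma size_prod_XsubC_exp (F : fieldType) M (s : seq F) :
  size (\prod_(x <- s) ('X - x%:P) ^+ M) = (M * size s).+1.
Proof.
rewrite prodrXl; have := size_exp (\prod_(x <- s) ('X - x%:P)) M.
rewrite size_prod_XsubC /= mulnC => <-; rewrite prednK // size_poly_gt0.
by rewrite monic_neq0 // monic_exp // monic_prod_XsubC.
Qed.

Lemma koszul_syzygy (R : comNzRingType) m n (P : 'I_m -> {poly R}) :
  (1 < m)%N -> (0 < n)%N -> (forall i, size (P i) <= n)%N ->
  exists A : 'I_m -> {poly R},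
    (forall i, size (A i) <= n)%N /\ (exists i, A i != 0) /\ \sum_i A i * P i = 0.
Proof.
move=> m_gt1 n_gt0 sP; pose i0 : 'I_m := Ordinal (ltnW m_gt1).
pose i1 : 'I_m := Ordinal m_gt1.
have [P1_eq0|P1_neq0] := eqVneq (P i1) 0.
  exists (fun i => (i == i1)%:R); split; [|split].
  - by move=> i; case: (i == i1); rewrite ?size_poly0 ?size_poly1.
  - by exists i1; rewrite eqxx oner_neq0.
  - rewrite (bigD1 i1) //= P1_eq0 mulr0 add0r big1 // => i /negbTE ->.
    by rewrite mul0r.
exists (fun i => if i == i0 then P i1 else if i == i1 then - P i0 else 0).
split; [|split].
- by move=> i; do 2?case: ifP => _; rewrite ?size_polyN ?size_poly0.
- by exists i0; rewrite eqxx.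
- rewrite (bigD1 i0) //= (bigD1 i1) //= big1 ?addr0.
    by rewrite mulNr mulrC subrr.
  by move=> i /andP[/negPf -> /negPf ->]; rewrite mul0r.
Qed.

Lemma ffun_additive_kernel (F : finFieldType) (I J : finType)
    (f : {ffun I -> F} -> {ffun J -> F}) :
  (#|J| < #|I|)%N -> {morph f : u v / u - v} -> exists2 u, u != 0 & f u = 0.
Proof.
move=> JI fB; have /injectivePn[u [v u_neq_v fuv]] : ~~ injectiveb f.
  apply: contraTN JI => /injectiveP/leq_card; rewrite !card_ffun -leqNgt.
  by rewrite leq_exp2l // finNzRing_gt1.
by exists (u - v); rewrite ?subr_eq0 // fB fuv subrr.
Qed.

Lemma card_setC_ge (R : numDomainType) (T : finType) (A : {set T}) (gamma : R) :
  #|A|%:R <= gamma * #|T|%:R -> #|T|%:R - gamma * #|T|%:R <= #|~: A|%:R.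
Proof. by rewrite -(cardsC A) natrD lerBlDr addrC lerD2l. Qed.

Section Counting.
Local Open Scope nat_scope.

Lemma sum_ord_ltn K n L : \sum_(a < K) (n + a < L) = minn K (L - n).
Proof. by elim: K => [|K IHK]; rewrite ?big_ord0 ?big_ord_recr ?IHK /=; lia. Qed.

Lemma sum_minn_blocks M q L : \sum_(j < M) minn q (L - j * q) = minn (M * q) L.
Proof. by elim: M => [|M IHM]; rewrite ?big_ord0 ?big_ord_recr ?IHM /=; lia. Qed.

Lemma card_digit_positions M K q L : K <= q -> L <= M * q ->
  K * L <= #|[set y : 'I_M * 'I_K | y.1 * q + y.2 < L]| * q.
Proof.
move=> Kq LMq; have -> : #|[set y : 'I_M * 'I_K | y.1 * q + y.2 < L]| =
    \sum_(j < M) \sum_(a < K) (j * q + a < L).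
  rewrite -sum1_card big_mkcond pair_big; apply: eq_bigr => y _.
  by rewrite inE; case: (_ < L).
rewrite -{1}(minn_idPr LMq) -sum_minn_blocks big_distrr big_distrl /=.
by apply: leq_sum => j _; rewrite sum_ord_ltn; nia.
Qed.

End Counting.

Section Pseudoderivatives.
Variable F : finFieldType.
Local Notation q := #|F|.
Local Notation Lam := (Lam F).

Lemma hasse_horner l (p : {poly F}) (a : F) :
  (hasse l p).[a] = (p \Po ('X + a%:P))`_l.
Proof.
rewrite /comp_poly addrC.
rewrite (@nderiv_taylor_wide _ (maxn (size p) l.+1) (p ^:P) a%:P 'X); last first.
- by rewrite size_map_polyC leq_maxl.
- exact: commr_polyX.
rewrite coef_sum (bigD1 (Ordinal (leq_maxr (size p) l.+1))) //= big1.
  by rewrite addr0 nderivn_map horner_map /= coefCM coefXn eqxx mulr1.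
move=> i /eqP ne; rewrite nderivn_map horner_map /= coefCM coefXn.
by case: eqP => [e|]; rewrite ?mulr0 //; case: ne; apply: val_inj.
Qed.

Lemma hasse_hornerM l (p p' : {poly F}) (a : F) :
  (hasse l (p * p')).[a] = \sum_(s < l.+1) (hasse s p).[a] * (hasse (l - s) p').[a].
Proof.
rewrite hasse_horner comp_polyM coefM.
by apply: eq_bigr => s _; rewrite !hasse_horner.
Qed.

Lemma size_hasse l (p : {poly F}) : (size (hasse l p) <= size p)%N.
Proof. by rewrite (leq_trans (size_poly _ _)) ?leq_subr. Qed.

Lemma XsubC_exp_dvdp M (G : {poly F}) (x : F) :
  (forall t, (t < M)%N -> (hasse t G).[x] = 0) -> ('X - x%:P) ^+ M %| G.
Proof.
move=> G_x; set P := G \Po ('X + x%:P).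
have P_low : take_poly M P = 0.
  apply/polyP => t; rewrite coef_take_poly coef0.
  by case: ifP => // /G_x; rewrite hasse_horner.
have -> : G = P \Po ('X - x%:P) by rewrite comp_polyXaddC_K.
rewrite -[P](poly_take_drop M) P_low add0r comp_polyM comp_poly_exp comp_polyX.
exact: dvdp_mull.
Qed.

Lemma hasse_vanishing_eq0 M (S : {set F}) (G : {poly F}) :
  (forall x, x \in S -> forall t, (t < M)%N -> (hasse t G).[x] = 0) ->
  (size G <= M * #|S|)%N -> G = 0.
Proof.
move=> G_S sG; apply/eqP; apply: contraTT sG => G_neq0; rewrite -ltnNge.
have dvdG : \prod_(x <- enum S) ('X - x%:P) ^+ M %| G.
  apply: prod_XsubC_exp_dvdp; first exact: enum_uniq.
  by move=> x; rewrite mem_enum => /G_S /XsubC_exp_dvdp.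
by have := dvdp_leq G_neq0 dvdG; rewrite size_prod_XsubC_exp -cardE.
Qed.

Lemma Lam_prod : Lam = \prod_(x : F) ('X - x%:P).
Proof. exact: finField_genPoly. Qed.

Lemma size_Lam : size Lam = q.+1.
Proof. by rewrite Lam_prod -big_enum size_prod_XsubC -cardE. Qed.

Lemma Lam_monic : Lam \is monic.
Proof. by rewrite Lam_prod monic_prod_XsubC. Qed.

Lemma Lam_neq0 : Lam != 0.
Proof. exact: monic_neq0 Lam_monic. Qed.

Lemma size_Lam_exp j : size (Lam ^+ j) = (q * j).+1.
Proof.
have := size_exp Lam j; rewrite size_Lam /= => <-.
by rewrite prednK // size_poly_gt0 expf_neq0 // Lam_neq0.
Qed.

Lemma root_Lam (a : F) : root Lam a.
Proof. by rewrite /root !hornerE expf_card subrr. Qed.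

Lemma Lam_translate (a : F) : Lam \Po ('X + a%:P) = Lam.
Proof.
rewrite Lam_prod (big_morph _ (fun p p' => comp_polyM p p' _) (comp_poly1 _)).
rewrite (reindex_inj (addrI a)); apply: eq_bigr => x _.
by rewrite comp_polyB comp_polyX comp_polyC polyCD opprD addrA addrK.
Qed.

Lemma hasse_horner_Lam_exp l j (a : F) : (hasse l (Lam ^+ j)).[a] = (Lam ^+ j)`_l.
Proof. by rewrite hasse_horner comp_poly_exp Lam_translate. Qed.

Lemma pseudoderiv_horner l (p : {poly F}) (a : F) :
  (pseudoderiv l p).[a] = (hasse l p).[a].
Proof.
rewrite /pseudoderiv [in RHS](divp_eq (hasse l p) Lam) hornerD hornerM.
by rewrite (eqP (root_Lam a)) mulr0 add0r.
Qed.

Lemma pseudoderiv_interp l (p Q : {poly F}) :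
  (size Q <= q)%N -> (forall a, (hasse l p).[a] = Q.[a]) -> pseudoderiv l p = Q.
Proof.
move=> sQ hQ; have Lam_dvd : Lam %| hasse l p - Q.
  rewrite Lam_prod -big_enum uniq_roots_dvdp ?uniq_rootsE ?enum_uniq //.
  by apply/allP => x _; rewrite /root !hornerE hQ subrr.
rewrite /pseudoderiv -[hasse l p](subrK Q) modpD (modp_eq0P _ _ Lam_dvd) add0r.
by rewrite modp_small // size_Lam ltnS.
Qed.

Lemma pseudoderivB l (p p' : {poly F}) :
  pseudoderiv l (p - p') = pseudoderiv l p - pseudoderiv l p'.
Proof. by rewrite /pseudoderiv /hasse nderivnB modpD modpN. Qed.

Lemma pseudoderiv_sum l I (r : seq I) (P : pred I) (f : I -> {poly F}) :
  pseudoderiv l (\sum_(i <- r | P i) f i) = \sum_(i <- r | P i) pseudoderiv l (f i).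
Proof.
rewrite /pseudoderiv /hasse linear_sum /=.
by rewrite (big_morph (fun p => p %% Lam) (modpD Lam) (mod0p Lam)).
Qed.

Lemma size_pseudoderiv_mul_Lam_exp l j (B : {poly F}) :
  (size B <= q)%N -> (size (pseudoderiv l (B * Lam ^+ j)) <= size B)%N.
Proof.
move=> sB; pose Q := \sum_(s < l.+1) (Lam ^+ j)`_(l - s) *: hasse s B.
have sQ : (size Q <= size B)%N.
  rewrite (leq_trans (size_sum _ _ _)) //; apply/bigmax_leqP => s _.
  exact: leq_trans (size_scale_leq _ _) (size_hasse _ _).
rewrite (@pseudoderiv_interp _ _ Q) ?(leq_trans sQ) // => a.
rewrite hasse_hornerM horner_sum; apply: eq_bigr => s _.
by rewrite hornerZ hasse_horner_Lam_exp mulrC.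
Qed.

Lemma is_pseudopolyE (k : nat) (A : {poly F}) :
  is_pseudopoly k A <-> forall l, (size (pseudoderiv l A) <= k.+1)%N.
Proof. by split=> H l; have := H l; rewrite -[1%R]/(Posz 1) -PoszD lez_nat addn1. Qed.

Lemma pseudopoly_card (k : nat) (A : {poly F}) : (q <= k.+1)%N -> is_pseudopoly k A.
Proof.
move=> qk; apply/is_pseudopolyE => l; apply: leq_trans qk.
by rewrite -ltnS -size_Lam ltn_modp Lam_neq0.
Qed.

Lemma pseudopoly_Lam_adic (k n : nat) (B : 'I_n -> {poly F}) :
  (k < q)%N -> (forall j, size (B j) <= k.+1)%N ->
  is_pseudopoly k (\sum_(j < n) B j * Lam ^+ j).
Proof.
move=> kq sB; apply/is_pseudopolyE => l; rewrite pseudoderiv_sum.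
rewrite (leq_trans (size_sum _ _ _)) //; apply/bigmax_leqP => j _.
by rewrite (leq_trans (size_pseudoderiv_mul_Lam_exp _ _ (leq_trans (sB j) kq))).
Qed.

Lemma Lam_adic_eq0 n (B : 'I_n -> {poly F}) :
  (forall j, size (B j) <= q)%N -> \sum_(j < n) B j * Lam ^+ j = 0 -> forall j, B j = 0.
Proof.
elim: n B => [|n IHn] B sB; first by move=> _ [].
rewrite big_ord_recl expr0 mulr1.
under eq_bigr do rewrite exprSr mulrA.
rewrite -mulr_suml => B_eq0.
have B0_eq0 : B ord0 = 0.
  have := congr1 (fun p => p %% Lam) B_eq0; rewrite /= modpD modp_mull mod0p addr0.
  by rewrite modp_small // size_Lam ltnS.
move: B_eq0; rewrite B0_eq0 add0r => /eqP; rewrite mulf_eq0 (negPf Lam_neq0) orbF.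
move=> /eqP /IHn Bl_eq0 j; have [j' ->|->] := unliftP ord0 j; last exact: B0_eq0.
exact: Bl_eq0.
Qed.

End Pseudoderivatives.

Lemma twisted_pseudopoly_factors (F : finFieldType) (I : Type) (r : I -> F -> F)
    h M (P : I -> {poly F}) :
  (forall i, is_twisted_pseudopoly (r i) h M (P i)) ->
  exists U : I -> nat -> {poly F}, forall i l, (l < M)%N ->
    (size (U i l) <= h.+1)%N /\ forall a, (hasse l (P i)).[a] = r i a * (U i l).[a].
Proof.
move=> twisted; have factor i l : exists U : {poly F}, (l < M)%N ==>
    (size U <= h.+1)%N && [forall a, (hasse l (P i)).[a] == r i a * U.[a]].
  have [lM|] := ltnP l M; last by exists 0.
  have [U [sU hU]] := twisted i l lM; exists U; rewrite sU.
  by apply/forallP => a; rewrite hU.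
exists (fun i l => xchoose (factor i l)) => i l lM.
have /implyP/(_ lM)/andP[sU /forallP hU] := xchooseP (factor i l).
by split=> // a; apply/eqP/hU.
Qed.

Section Syzygy.
Variables (F : finFieldType) (m M k h L : nat).
Variables (r : 'I_m -> F -> F) (Fs : 'I_m -> {poly F}) (U : 'I_m -> nat -> {poly F}).
Local Notation q := #|F|.
Local Notation Lam := (Lam F).
Hypothesis k_lt_q : (k < q)%N.
Hypothesis Fs_twisted : forall i l, (l < M)%N ->
  (size (U i l) <= h.+1)%N /\ forall a, (hasse l (Fs i)).[a] = r i a * (U i l).[a].

Definition digit_positions : {set 'I_M * 'I_k.+1} :=
  [set y : 'I_M * 'I_k.+1 | y.1 * q + y.2 < L]%N.
(* The unknown (i, (j, a)) is the coefficient of X^a Lambda^j in A_i; only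
   positions with j q + a < L are free, which keeps deg A_i < L. *)
Local Notation Unknowns := {x : 'I_m * ('I_M * 'I_k.+1) | x.2 \in digit_positions}.

Definition unknown (u : {ffun Unknowns -> F}) x : F := oapp u 0 (insub x).

Definition digit u i (j : 'I_M) : {poly F} := \poly_(a < k.+1) unknown u (i, (j, inord a)).

Definition syz u i : {poly F} := \sum_(j < M) digit u i j * Lam ^+ j.

Definition twisted_constraint u t : {poly F} :=
  \sum_i \sum_(s < t.+1) pseudoderiv s (syz u i) * U i (t - s).

Lemma unknownB u v x : unknown (u - v) x = unknown u x - unknown v x.
Proof. by rewrite /unknown; case: insubP => [y _ _|_] /=; rewrite ?ffunE ?subr0. Qed.

Lemma unknown_val u y : unknown u (val y) = u y.
Proof. by rewrite /unknown valK. Qed.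

Lemma syzB u v i : syz (u - v) i = syz u i - syz v i.
Proof.
rewrite /syz -sumrB; apply: eq_bigr => j _; rewrite -mulrBl; congr (_ * _).
by apply/polyP => a; rewrite coefB !coef_poly; case: ifP; rewrite ?unknownB ?subr0.
Qed.

Lemma twisted_constraintB u v t :
  twisted_constraint (u - v) t = twisted_constraint u t - twisted_constraint v t.
Proof.
rewrite /twisted_constraint -sumrB; apply: eq_bigr => i _; rewrite -sumrB.
by apply: eq_bigr => s _; rewrite syzB pseudoderivB mulrBl.
Qed.

Lemma size_digit u i j : (size (digit u i j) <= k.+1)%N.
Proof. exact: size_poly. Qed.

Lemma size_digit_positions u i j : (size (digit u i j) <= L - j * q)%N.
Proof.
apply/leq_sizeP => a aL; rewrite coef_poly.
by case: ltnP => // ak; rewrite /unknown insubN //= inE inordK //= -leqNgt -leq_subLR.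
Qed.

Lemma size_syz u i : (size (syz u i) <= L)%N.
Proof.
rewrite (leq_trans (size_sum _ _ _)) //; apply/bigmax_leqP => j _.
have [->|d_neq0] := eqVneq (digit u i j) 0; first by rewrite mul0r size_poly0.
rewrite size_Mmonic ?monic_exp ?Lam_monic // size_Lam_exp addnS /= mulnC.
rewrite -size_poly_gt0 in d_neq0; have := size_digit_positions u i j.
by move: d_neq0; move: (size _) (j * q)%N => s x; lia.
Qed.

Lemma pseudopoly_syz u i : is_pseudopoly k (syz u i).
Proof. exact: pseudopoly_Lam_adic (size_digit u i). Qed.

Lemma syz_neq0 (u : {ffun Unknowns -> F}) y : u y != 0 -> syz u (val y).1 != 0.
Proof.
apply: contra_neq => syz_eq0.
have digits_eq0 := Lam_adic_eq0 (fun j => leq_trans (size_digit u _ j) k_lt_q) syz_eq0.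
have := congr1 (coefp (val y).2.2) (digits_eq0 (val y).2.1).
rewrite /= coef_poly ltn_ord coef0 inord_val -unknown_val => <-.
by rewrite -!surjective_pairing.
Qed.

Lemma card_Unknowns : #|{: Unknowns}| = (m * #|digit_positions|)%N.
Proof.
rewrite card_sig -[in RHS](card_ord m) -cardsT -cardsX.
by apply/eq_card => -[i y]; rewrite !inE.
Qed.

Lemma size_twisted_constraint u t :
  (t < M)%N -> (size (twisted_constraint u t) <= k.+1 + h)%N.
Proof.
move=> tM; rewrite (leq_trans (size_sum _ _ _)) //; apply/bigmax_leqP => i _.
rewrite (leq_trans (size_sum _ _ _)) //; apply/bigmax_leqP => s _.
have [sU _] := Fs_twisted i (leq_ltn_trans (leq_subr s t) tM).
have := pseudopoly_syz u i; move/is_pseudopolyE/(_ s).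
have := size_polyMleq (pseudoderiv s (syz u i)) (U i (t - s)).
by move: sU; move: (size _) (size _) (size _) => a b c; lia.
Qed.

Lemma hasse_syzygy_horner u t x rho : (t < M)%N -> (forall i, r i x = rho) ->
  (hasse t (\sum_i syz u i * Fs i)).[x] = rho * (twisted_constraint u t).[x].
Proof.
move=> tM r_x; rewrite /hasse linear_sum horner_sum /= horner_sum mulr_sumr.
apply: eq_bigr => i _; rewrite hasse_hornerM horner_sum mulr_sumr.
apply: eq_bigr => s _; rewrite hornerM pseudoderiv_horner.
have [_ ->] := Fs_twisted i (leq_ltn_trans (leq_subr s t) tM).
by rewrite r_x mulrCA.
Qed.

Lemma many_unknowns : (L <= M * q)%N -> (M * (k.+1 + h) * q < m * k.+1 * L)%N ->
  (M * (k.+1 + h) < #|{: Unknowns}|)%N.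
Proof.
move=> LMq count; rewrite card_Unknowns -(@ltn_pmul2r q) ?(leq_ltn_trans _ k_lt_q) //.
by rewrite (leq_trans count) // -!mulnA leq_mul2l card_digit_positions ?orbT.
Qed.

Lemma syzygy_exists (S : {set F}) :
  (L <= M * q)%N -> (M * (k.+1 + h) * q < m * k.+1 * L)%N ->
  {in S, forall x, exists rho, forall i, r i x = rho} ->
  (forall i, L + size (Fs i) <= (M * #|S|).+1)%N ->
  exists A : 'I_m -> {poly F},
    (forall i, is_pseudopoly k (A i) /\ (size (A i) <= L)%N) /\
    (exists i, A i != 0) /\ \sum_i A i * Fs i = 0.
Proof.
move=> LMq count r_S size_Fs.
pose constraint_coefs (u : {ffun Unknowns -> F}) :=
  [ffun e : 'I_M * 'I_(k.+1 + h) => (twisted_constraint u e.1)`_e.2].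
have [w w_neq0 constraints_w] : exists2 w, w != 0 & constraint_coefs w = 0.
  apply: ffun_additive_kernel; first by rewrite card_prod !card_ord many_unknowns.
  by move=> u v; apply/ffunP => e; rewrite !ffunE twisted_constraintB coefB.
have constraint_w_eq0 t : (t < M)%N -> twisted_constraint w t = 0.
  move=> tM; apply/polyP => e; rewrite coef0.
  have [ek|ke] := ltnP e (k.+1 + h).
    by move/ffunP/(_ (Ordinal tM, Ordinal ek)): constraints_w; rewrite !ffunE.
  exact/leq_sizeP/(leq_trans (size_twisted_constraint w tM)).
have [y wy] : exists y, w y != 0.
  apply/existsP; apply: contraNT w_neq0 => /existsPn w_eq0.
  by apply/eqP/ffunP => y; rewrite ffunE; apply/eqP/negPn/w_eq0.
exists (syz w); split; [|split].
- by move=> i; split; [exact: pseudopoly_syz | exact: size_syz].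
- by exists (val y).1; exact: syz_neq0.
- apply: (hasse_vanishing_eq0 (M := M) (S := S)).
    move=> x /r_S [rho r_x] t tM; rewrite (hasse_syzygy_horner _ tM r_x).
    by rewrite constraint_w_eq0 // horner0 mulr0.
  rewrite (leq_trans (size_sum _ _ _)) //; apply/bigmax_leqP => i _.
  have := size_polyMleq (syz w i) (Fs i); have := size_syz w i; have := size_Fs i.
  by move: (size _) (size _) (size (Fs i)) => a b c; lia.
Qed.

End Syzygy.

Lemma syzygy_count_ineq (R : realFieldType) (m c h M gamma k q g : R) :
  0 < m -> 0 < M -> 0 <= gamma -> 0 < q -> 0 <= k -> 0 <= h ->
  c * m < (m - 1 - m * gamma) * M ->
  M * (h + 1) < k * ((m - 1 - m * gamma) * M - m * c) ->
  q - gamma * q <= g ->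
  c * q < M * g /\ q * M * (k + 1 + h) < m * (k + 1) * (M * g - c * q).
Proof.
move=> m_gt0 M_gt0 gamma_ge0 q_gt0 k_ge0 h_ge0 rate_c k_large g_large.
set E := M - gamma * M - c.
have E_gt0 : 0 < E by rewrite -(pmulr_rgt0 _ m_gt0) /E; lra.
have qE_le : q * E <= M * g - c * q.
  have : 0 <= M * (g - (q - gamma * q)) by rewrite mulr_ge0 ?subr_ge0 // ltW.
  rewrite /E; lra.
have kE_gt : M * (k + 1 + h) < m * (k + 1) * E.
  have mE_gt0 : 0 < m * E by rewrite mulr_gt0.
  have D_eq : (m - 1 - m * gamma) * M - m * c = m * E - M by rewrite /E; ring.
  rewrite D_eq in k_large; lra.
have qE_gt0 : 0 < q * E by rewrite mulr_gt0.
split; first lra.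
have q_kE_gt : q * (M * (k + 1 + h)) < q * (m * (k + 1) * E) by rewrite ltr_pM2l.
have m_qE_le : m * (k + 1) * (q * E) <= m * (k + 1) * (M * g - c * q).
  by rewrite ler_pM2l // mulr_gt0 //; lra.
lra.
Qed.

Lemma admissible_parameters (R : realFieldType) (m c h M q g : nat) (gamma : R) (k : int) :
  (0 < m)%N -> (0 < c)%N -> (0 < M)%N -> (0 < q)%N -> 0 <= gamma ->
  c%:R < ((m%:R - 1) - m%:R * gamma) / m%:R * M%:R ->
  q%:R - gamma * q%:R <= g%:R ->
  M%:R / (((m%:R - 1) - m%:R * gamma) * M%:R - m%:R * c%:R) * (h%:R + 1) < k%:~R ->
  exists kn : nat, [/\ k = kn, (1 < m)%N, (c <= M)%N, (c * q < M * g)%N &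
    (M * (kn.+1 + h) * q < m * kn.+1 * (M * g - c * q))%N].
Proof.
move=> m_gt0 c_gt0 M_gt0 q_gt0 gamma_ge0 rate_c g_large k_large.
have mR : (0 : R) < m%:R by rewrite ltr0n.
have MR : (0 : R) < M%:R by rewrite ltr0n.
have cR : (0 : R) < c%:R by rewrite ltr0n.
have {}rate_c : c%:R * m%:R < (m%:R - 1 - m%:R * gamma) * M%:R.
  by rewrite -ltr_pdivlMr // mulrAC.
set D := _ - m%:R * c%:R in k_large.
have D_gt0 : 0 < D by rewrite subr_gt0 mulrC.
have k_gt0 : (0 < k)%R.
  rewrite -(ltr0z R); apply: lt_trans k_large.
  by rewrite !mulr_gt0 ?invr_gt0 // ltr_pwDr ?ler0n.
case: k k_gt0 k_large => [kn|//] _; rewrite -pmulrn mulrAC ltr_pdivrMr // => k_large.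
have qR : (0 : R) < q%:R by rewrite ltr0n.
have [cq_lt ineq] := syzygy_count_ineq mR MR gamma_ge0 qR (ler0n _ kn) (ler0n _ h)
  rate_c k_large g_large.
have cq_lt' : (c * q < M * g)%N by rewrite -(ltr_nat R) !natrM.
exists kn; split=> //.
- rewrite ltnNge; apply: contraTN rate_c => m_le1.
  have -> : m = 1%N by lia.
  by rewrite -leNgt mulr1; nra.
- have mgM_ge0 : 0 <= m%:R * gamma * M%:R by rewrite !mulr_ge0 // ltW.
  have : c%:R * m%:R < M%:R * m%:R :> R by lra.
  by rewrite ltr_pM2r // ltr_nat => /ltnW.
rewrite -(ltr_nat R) natrM [in X in _ < X]natrM (natrB _ (ltnW cq_lt')) !natrM.
by rewrite -addn1 !natrD [_ * q%:R]mulrC mulrA.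
Qed.

Unset Implicit Arguments.

Theorem lemma5p8 (F : finFieldType) (R : realType) (m c h M : nat) (gamma : R)
  (k : int) (r : 'I_m -> F -> F) (Fs : 'I_m -> {poly F}) :
  (0 < m)%N -> (0 < c)%N -> (0 < h)%N -> (0 < M)%N -> 0 <= gamma ->
  c%:R < ((m%:R - 1) - m%:R * gamma) / m%:R * M%:R ->
  (#|[set a : F | [exists i, exists j, r i a != r j a]]|%:R <= gamma * #|F|%:R) ->
  (forall i, (size (Fs i) <= c * #|F|)%N) ->
  (forall i, is_twisted_pseudopoly (r i) h M (Fs i)) ->
  M%:R / (((m%:R - 1) - m%:R * gamma) * M%:R - m%:R * c%:R) * (h%:R + 1) < (k%:~R : R) ->
  exists A : 'I_m -> {poly F},
    (forall i, is_pseudopoly k (A i) /\ (size (A i) <= M * #|F|)%N) /\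
    (exists i, A i != 0) /\
    \sum_(i < m) A i * Fs i = 0.
Proof.
move=> m_gt0 c_gt0 _ M_gt0 gamma_ge0 rate_c few_bad size_Fs twisted k_large.
set bad := [set a | _] in few_bad; set q := #|F|; pose g := #|~: bad|.
have q_gt0 : (0 < q)%N := ltnW (finNzRing_gt1 F).
have g_large := card_setC_ge few_bad.
have [kn [-> m_gt1 c_le_M cq_lt count]] :=
  admissible_parameters m_gt0 c_gt0 M_gt0 q_gt0 gamma_ge0 rate_c g_large k_large.
have [U Fs_twisted] := twisted_pseudopoly_factors twisted.
have [q_le_kn|kn_lt_q] := leqP q kn.
  have size_Fs' i : (size (Fs i) <= M * q)%N.
    by rewrite (leq_trans (size_Fs i)) // leq_mul2r c_le_M orbT.
  have Mq_gt0 : (0 < M * q)%N by rewrite muln_gt0 M_gt0.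
  have [A [sA A_neq0_syz]] := koszul_syzygy m_gt1 Mq_gt0 size_Fs'.
  by exists A; split=> // i; split; [exact: pseudopoly_card (leqW q_le_kn) | exact: sA].
pose L := ((M * g).+1 - c * q)%N.
have L_le : (L <= M * q)%N.
  by rewrite leq_subLR -addn1 addnC leq_add ?muln_gt0 ?c_gt0 // leq_mul2l max_card orbT.
have [|||A [AL A_neq0_syz]] := syzygy_exists (L := L) (S := ~: bad) kn_lt_q Fs_twisted L_le.
- apply: leq_trans count _.
  by rewrite leq_mul2l leq_sub2r ?leqnSn ?orbT.
- move=> x; rewrite !inE => /existsPn x_good; exists (r (Ordinal m_gt0) x) => i.
  by move/existsPn/(_ (Ordinal m_gt0)): (x_good i); rewrite negbK => /eqP.
- move=> i; have := size_Fs i; rewrite /L -/g.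
  by move: cq_lt; move: (size _) (M * g)%N (c * q)%N => a b d; lia.
by exists A; split=> // i; have [? ?] := AL i; split=> //; apply: leq_trans L_le.
Qed.
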